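(* Let $H<G$ be groups and $K$ a group. Then $\ast_{H\times K}(G\times K)$ embeds into $(\ast_H G)\times K$.
   Context: For a group $G$ and subgroup $H<G$, $\ast_H G$ denotes the amalgamated free product of countably infinitely many copies of $G$ over the common subgroup $H$ (each copy containing $H$ via the given inclusion). *)

Set Implicit Arguments.

Record group := Group {
  carrier :> Type;
  gmul : carrier -> carrier -> carrier;
  gone : carrier;
  ginv : carrier -> carrier;
  gmulA : forall x y z, gmul x (gmul y z) = gmul (gmul x y) z;
  gmul1g : forall x, gmul gone x = x;
  gmulVg : forall x, gmul (ginv x) x = gone
}.

Arguments gmul {g}.
Arguments gone {g}.
Arguments ginv {g}.

Record hom (G1 G2 : group) := Hom {
  hfun :> G1 -> G2;
  hmul : forall x y, hfun (gmul x y) = gmul (hfun x) (hfun y)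
}.

Definition prod_group (G K : group) : group.
Proof.
refine (@Group (G * K)%type
  (fun a b => (gmul (fst a) (fst b), gmul (snd a) (snd b)))
  (gone, gone)
  (fun a => (ginv (fst a), ginv (snd a))) _ _ _).
- intros [a b] [c d] [e f]; simpl; now rewrite !gmulA.
- intros [a b]; simpl; now rewrite !gmul1g.
- intros [a b]; simpl; now rewrite !gmulVg.
Defined.

Definition hom_prod (G1 G2 K1 K2 : group) (f : hom G1 G2) (g : hom K1 K2) :
  hom (prod_group G1 K1) (prod_group G2 K2).
Proof.
refine (@Hom (prod_group G1 K1) (prod_group G2 K2)
  (fun a => (f (fst a), g (snd a))) _).
intros [a b] [c d]; simpl; now rewrite !hmul.
Defined.

Definition hom_id (G : group) : hom G G.
Proof. refine (@Hom G G (fun x => x) _). reflexivity. Defined.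

(* [P] together with the maps [j n : G -> P] (n : nat) is the amalgamated
   free product of countably infinitely many copies of G over the common
   subgroup H (embedded in G via [iota]); characterized by its universal
   property (determining it up to unique isomorphism). *)
Definition is_amalgam (H G : group) (iota : hom H G)
  (P : group) (j : nat -> hom G P) : Prop :=
  (forall n m (h : H), j n (iota h) = j m (iota h)) /\
  forall (Q : group) (f : nat -> hom G Q),
    (forall n m (h : H), f n (iota h) = f m (iota h)) ->
    exists phi : hom P Q,
      (forall n (g : G), phi (j n g) = f n g) /\
      (forall psi : hom P Q, (forall n (g : G), psi (j n g) = f n g) ->
         forall x, psi x = phi x).

Definition injective_hom (G1 G2 : group) (f : hom G1 G2) : Prop :=
  forall x y, f x = f y -> x = y.


(* The map
   [phi] sending [j1 n (g, k)] to [(j2 n g, k)] has a left inverse [psi]: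
   the maps [g |-> j1 n (g, 1)] induce [alpha : P2 -> P1], the element
   [kappa k := j1 n (1, k)] does not depend on [n] because [(1, k)] lies in
   the amalgamated subgroup, and [psi (x, k) := alpha x * kappa k].  This is
   a homomorphism because [alpha x] commutes with [kappa k]: it does so on
   generators, and conjugation by [kappa k] composed with [alpha] agrees with
   [alpha] on generators, hence everywhere.  Finally [psi \o phi] and the
   identity agree on generators, so they coincide. *)

Set Implicit Arguments.

Arguments gmulA {g} x y z.
Arguments gmul1g {g} x.
Arguments gmulVg {g} x.

Section GroupFacts.
Context {G : group}.
Implicit Types x y z : G.

Lemma gmulgV x : gmul x (ginv x) = gone.
Proof.
  set (e := gmul x (ginv x)).
  assert (e_idem : gmul e e = e).
  { unfold e. rewrite <- gmulA, (gmulA (ginv x) x), gmulVg, gmul1g.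
    reflexivity. }
  transitivity (gmul (ginv e) (gmul e e)).
  - rewrite gmulA, gmulVg, gmul1g. reflexivity.
  - rewrite e_idem. apply gmulVg.
Qed.

Lemma gmulg1 x : gmul x gone = x.
Proof. rewrite <- (gmulVg x), gmulA, gmulgV. apply gmul1g. Qed.

Lemma gmul_cancel_l x y z : gmul x y = gmul x z -> y = z.
Proof.
  intros E. rewrite <- (gmul1g y), <- (gmul1g z), <- (gmulVg x), <- !gmulA, E.
  reflexivity.
Qed.

Definition commute x y : Prop := gmul x y = gmul y x.

Definition conj_hom (c : G) : hom G G.
Proof.
  refine (@Hom G G (fun x => gmul c (gmul x (ginv c))) _).
  intros x y. rewrite <- !gmulA, (gmulA (ginv c) c), gmulVg, gmul1g.
  reflexivity.
Defined.

Lemma conj_hom_fixed c x : conj_hom c x = x <-> commute x c.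
Proof.
  unfold commute. split; intros E.
  - transitivity (gmul (conj_hom c x) c).
    + now rewrite E.
    + simpl. rewrite <- !gmulA, gmulVg, gmulg1. reflexivity.
  - simpl. rewrite gmulA, <- E, <- gmulA, gmulgV, gmulg1. reflexivity.
Qed.

End GroupFacts.

Lemma hom_one (G1 G2 : group) (f : hom G1 G2) : f gone = gone.
Proof.
  apply (gmul_cancel_l (f gone)). rewrite <- hmul, gmul1g, gmulg1. reflexivity.
Qed.

Definition hom_comp (A B C : group) (g : hom B C) (f : hom A B) : hom A C.
Proof.
  refine (@Hom A C (fun x => g (f x)) _). intros x y. now rewrite !hmul.
Defined.

Lemma hom_compE (A B C : group) (g : hom B C) (f : hom A B) x :
  hom_comp g f x = g (f x).
Proof. reflexivity. Qed.

Lemma injective_hom_of_retraction (A B : group) (f : hom A B) (r : hom B A) :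
  (forall x, r (f x) = x) -> injective_hom f.
Proof. intros rK x y E. rewrite <- (rK x), <- (rK y), E. reflexivity. Qed.

Section CommutingPair.
Variables (A K P : group) (alpha : hom A P) (kappa : hom K P).
Hypothesis alpha_kappa_commute : forall a k, commute (alpha a) (kappa k).

Definition pair_hom : hom (prod_group A K) P.
Proof.
  refine (@Hom (prod_group A K) P
            (fun ak => gmul (alpha (fst ak)) (kappa (snd ak))) _).
  intros [a1 k1] [a2 k2]. simpl. rewrite !hmul, <- !gmulA. f_equal.
  rewrite !gmulA. f_equal. apply alpha_kappa_commute.
Defined.

Lemma pair_homE a k : pair_hom (a, k) = gmul (alpha a) (kappa k).
Proof. reflexivity. Qed.

End CommutingPair.

Section ProductEmbeddings.
Variables G K : group.

Definition inl_hom : hom G (prod_group G K).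
Proof.
  refine (@Hom G (prod_group G K) (fun g => (g, gone)) _).
  intros x y. simpl. now rewrite gmul1g.
Defined.

Definition inr_hom : hom K (prod_group G K).
Proof.
  refine (@Hom K (prod_group G K) (fun k => (gone, k)) _).
  intros x y. simpl. now rewrite gmul1g.
Defined.

Lemma inl_inr_commute g k : commute (inl_hom g) (inr_hom k).
Proof. unfold commute. simpl. now rewrite !gmul1g, !gmulg1. Qed.

Lemma inl_mul_inr g k : gmul (inl_hom g) (inr_hom k) = (g, k).
Proof. simpl. now rewrite gmul1g, gmulg1. Qed.

End ProductEmbeddings.

Lemma hom_prod_inr (H G K : group) (iota : hom H G) (k : K) :
  hom_prod iota (hom_id K) (inr_hom H K k) = inr_hom G K k.
Proof. simpl. now rewrite hom_one. Qed.

Section Amalgam.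
Variables (H G P : group) (iota : hom H G) (j : nat -> hom G P).
Hypothesis amalgam : is_amalgam iota j.

Lemma amalgam_lift (Q : group) (f : nat -> hom G Q) :
  (forall n m h, f n (iota h) = f m (iota h)) ->
  exists phi : hom P Q, forall n g, phi (j n g) = f n g.
Proof.
  intros Cf. destruct (proj2 amalgam Q f Cf) as [phi [phi_j _]].
  exists phi. exact phi_j.
Qed.

Lemma amalgam_hom_ext (Q : group) (psi1 psi2 : hom P Q) :
  (forall n g, psi1 (j n g) = psi2 (j n g)) -> forall x, psi1 x = psi2 x.
Proof.
  intros E x. destruct amalgam as [Cj U].
  destruct (U Q (fun n => hom_comp psi2 (j n))) as [phi [_ Uphi]].
  { intros n m h. simpl. now rewrite (Cj n m h). }
  rewrite (Uphi psi1 E x), (Uphi psi2 (fun _ _ => eq_refl) x). reflexivity.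
Qed.

Lemma amalgam_commute (Q : group) (alpha : hom P Q) (c : Q) :
  (forall n g, commute (alpha (j n g)) c) -> forall x, commute (alpha x) c.
Proof.
  intros Cgen x. apply conj_hom_fixed.
  apply (amalgam_hom_ext (hom_comp (conj_hom c) alpha) alpha).
  intros n g. exact (proj2 (conj_hom_fixed c _) (Cgen n g)).
Qed.

End Amalgam.

Section ProductAmalgam.
Variables (H G K : group) (iota : hom H G).
Variables (P1 : group) (j1 : nat -> hom (prod_group G K) P1).
Hypothesis amalgam1 : is_amalgam (hom_prod iota (hom_id K)) j1.
Variables (P2 : group) (j2 : nat -> hom G P2).
Hypothesis amalgam2 : is_amalgam iota j2.

Let kappa : hom K P1 := hom_comp (j1 0) (inr_hom G K).

Lemma amalgam_inr_indep n k : j1 n (inr_hom G K k) = kappa k.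
Proof.
  transitivity (j1 0 (inr_hom G K k)); [| reflexivity].
  rewrite <- !(@hom_prod_inr H G K iota). apply (proj1 amalgam1).
Qed.

Lemma amalgam_prod_retraction :
  exists psi : hom (prod_group P2 K) P1,
    forall n g k, psi (j2 n g, k) = j1 n (g, k).
Proof.
  destruct (amalgam_lift amalgam2 (fun n => hom_comp (j1 n) (inl_hom G K)))
    as [alpha alpha_j].
  { intros n m h. simpl. exact (proj1 amalgam1 n m (h, gone)). }
  assert (alpha_kappa : forall x k, commute (alpha x) (kappa k)).
  { intros x k. apply (amalgam_commute amalgam2). intros n g.
    rewrite alpha_j, hom_compE, <- (amalgam_inr_indep n k).
    unfold commute. rewrite <- !hmul. f_equal. apply inl_inr_commute. }
  exists (pair_hom alpha kappa alpha_kappa). intros n g k.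
  rewrite pair_homE, alpha_j, hom_compE, <- (amalgam_inr_indep n k).
  rewrite <- hmul. f_equal. apply inl_mul_inr.
Qed.

End ProductAmalgam.

Theorem lemma2p4 (H G K : group) (iota : hom H G)
  (iota_inj : injective_hom iota)
  (P1 : group) (j1 : nat -> hom (prod_group G K) P1)
  (HP1 : is_amalgam (hom_prod iota (hom_id K)) j1)
  (P2 : group) (j2 : nat -> hom G P2)
  (HP2 : is_amalgam iota j2) :
  exists phi : hom P1 (prod_group P2 K), injective_hom phi.
Proof.
  destruct (amalgam_lift HP1 (fun n => hom_prod (j2 n) (hom_id K)))
    as [phi phi_j].
  { intros n m [h k]. simpl. now rewrite (proj1 HP2 n m h). }
  destruct (amalgam_prod_retraction HP1 HP2) as [psi psi_j].
  exists phi. apply (injective_hom_of_retraction phi psi).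
  apply (amalgam_hom_ext HP1 (hom_comp psi phi) (hom_id P1)).
  intros n [g k]. simpl. rewrite phi_j. apply psi_j.
Qed.
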